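(* Let $M$ be an $m_1\times m_2\times m_3$ table with $m_1\ge m_2\ge m_3$, containing $m_1m_2m_3$ distinct (labeled) items, one in each cell. A shuffle operation arbitrarily permutes the items lying in a single column of $M$ in one of the three dimensions (i.e., the cells of a line parallel to one coordinate axis). Then for any two arrangements $S$ and $G$ of the items, $M$ can be taken from $S$ to $G$ using at most $m_1m_2+m_3(2m_2+m_1)+m_1m_2$ shuffles. *)

From mathcomp Require Import all_boot all_order all_fingroup.
Set Implicit Arguments. Unset Strict Implicit. Unset Printing Implicit Defensive.

(* Items are labeled; we identify the item set
   with the cell set (any bijective labeling), so an arrangement is a
   permutation A : {perm cell}: item x sits in cell A x. *)
Definition cell (m1 m2 m3 : nat) : finType := ('I_m1 * 'I_m2 * 'I_m3)%type.

Definition on_line m1 m2 m3 (d : 'I_3) (c x : cell m1 m2 m3) : bool :=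
  match val d with
  | 0 => (x.1.2 == c.1.2) && (x.2 == c.2)
  | 1 => (x.1.1 == c.1.1) && (x.2 == c.2)
  | _ => (x.1.1 == c.1.1) && (x.1.2 == c.1.2)
  end.

Definition is_shuffle m1 m2 m3 (s : {perm cell m1 m2 m3}) : Prop :=
  exists (d : 'I_3) (c : cell m1 m2 m3),
    forall x, ~~ on_line d c x -> s x = x.

(* Applying shuffle s to arrangement A moves the item in cell y to cell s y:
   the new arrangement is (A * s)%g, i.e. x |-> s (A x). *)
Definition apply_shuffles m1 m2 m3 (A : {perm cell m1 m2 m3})
  (ss : seq {perm cell m1 m2 m3}) : {perm cell m1 m2 m3} :=
  foldl (fun B s => (B * s)%g) A ss.

From mathcomp Require Import all_boot all_order all_fingroup.
From mathcomp Require Import zify.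
Set Implicit Arguments. Unset Strict Implicit. Unset Printing Implicit Defensive.

(* The required move is the permutation S^-1 G of the cells.  By the
   rearrangeability of the three-stage Clos network (Koenig's edge colouring
   theorem, via Hall's theorem), S^-1 G = t1 rho t2 where t1, t2 move items only
   along the lines of the third axis and rho preserves every layer of constant
   third coordinate.  Inside the layers the same factorization gives
   rho = u1 rho' u2 with u1, u2 moving along the first axis and rho' along the
   second.  A permutation preserving every line of a family of parallel lines is
   a product of one shuffle per line, hence at most
   m1 m2 + m2 m3 + m1 m3 + m2 m3 + m1 m2 shuffles. *)

Section Hall.
(* [y0] is the value of matchings of the empty set, which are still functions X -> Y. *)
Variables (X Y : finType) (r : X -> Y -> bool) (y0 : Y).

Definition neighbours (S : {set X}) : {set Y} := [set y | [exists x in S, r x y]].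

Lemma neighboursS (S1 S2 : {set X}) : S1 \subset S2 -> neighbours S1 \subset neighbours S2.
Proof.
move=> sS12; apply/subsetP=> y; rewrite !inE => /existsP[x /andP[xS1 rxy]].
by apply/existsP; exists x; rewrite (subsetP sS12 x xS1).
Qed.

Lemma neighboursU (S1 S2 : {set X}) : neighbours (S1 :|: S2) = neighbours S1 :|: neighbours S2.
Proof.
apply/setP=> y; rewrite !inE; apply/existsP/orP => [[x]|[]/existsP[x]].
- rewrite inE => /andP[/orP[] xS rxy]; [left|right].
  + by apply/existsP; exists x; rewrite xS.
  + by apply/existsP; exists x; rewrite xS.
- by move=> /andP[xS rxy]; exists x; rewrite inE xS rxy.
- by move=> /andP[xS rxy]; exists x; rewrite inE xS rxy orbT.
Qed.

Definition hall_condition (Xs : {set X}) (Ys : {set Y}) :=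
  forall S : {set X}, S \subset Xs -> #|S| <= #|neighbours S :&: Ys|.

Definition matchable (Xs : {set X}) (Ys : {set Y}) :=
  exists2 f : X -> Y, {in Xs, forall x, (f x \in Ys) && r x (f x)} & {in Xs &, injective f}.

Lemma matchable0 Ys : matchable set0 Ys.
Proof. by exists (fun=> y0) => x; rewrite inE. Qed.

Lemma matchable_split Xs Ys X1 Y1 :
  matchable X1 (Ys :&: Y1) -> matchable (Xs :\: X1) (Ys :\: Y1) -> matchable Xs Ys.
Proof.
move=> [f1 f1P f1I] [f2 f2P f2I].
have f1Y1 x : x \in X1 -> f1 x \in Y1 by move/f1P; rewrite inE => /andP[/andP[]].
have f2Y1 x : x \in Xs -> x \notin X1 -> f2 x \notin Y1.
  by move=> xXs xX1; have := f2P x; rewrite !inE xX1 xXs => /(_ isT) /andP[/andP[]].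
exists (fun x => if x \in X1 then f1 x else f2 x) => [x xXs | x y xXs yXs].
  case: ifP => xX1.
    by have := f1P x xX1; rewrite inE => /andP[/andP[-> _] ->].
  by have := f2P x; rewrite !inE xX1 xXs => /(_ isT) /andP[/andP[_ ->] ->].
case: ifP => xX1; case: ifP => yX1 fxy.
- exact: f1I.
- by have /negP[] := f2Y1 y yXs (negbT yX1); rewrite -fxy f1Y1.
- by have /negP[] := f2Y1 x xXs (negbT xX1); rewrite fxy f1Y1.
- by apply: f2I; rewrite // inE ?xX1 ?yX1.
Qed.

Lemma hall_condition_tight Xs Ys (S : {set X}) : hall_condition Xs Ys -> S \subset Xs ->
  #|neighbours S :&: Ys| <= #|S| ->
  hall_condition S (Ys :&: neighbours S) /\ hall_condition (Xs :\: S) (Ys :\: neighbours S).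
Proof.
move=> hallXY sSXs tightS; split=> [S' sS'S | T sTD].
  rewrite [Ys :&: _]setIC setIA (setIidPl (neighboursS sS'S)).
  exact: hallXY (subset_trans sS'S sSXs).
have sTXs : T \subset Xs := subset_trans sTD (subsetDl _ _).
have dTS : [disjoint T & S].
  by rewrite disjoints_subset (subset_trans sTD) // setDE subsetIr.
have := hallXY (T :|: S); rewrite subUset sTXs sSXs => /(_ isT).
rewrite (cardsU T S) (disjoint_setI0 dTS) cards0 subn0 neighboursU.
have sN : (neighbours T :|: neighbours S) :&: Ys \subset
    (neighbours T :&: (Ys :\: neighbours S)) :|: (neighbours S :&: Ys).
  apply/subsetP=> y; rewrite !(in_setI, in_setU, in_setD).
  by case: (y \in neighbours S); case: (y \in neighbours T); case: (y \in Ys).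
have := leq_trans (subset_leq_card sN) (leq_card_setU _ _).1.
lia.
Qed.

Lemma hall_condition_slack (Xs : {set X}) (Ys : {set Y}) x0 y1 :
  (forall S : {set X}, S \subset Xs -> S != set0 -> S != Xs ->
     #|S| < #|neighbours S :&: Ys|) ->
  x0 \in Xs -> hall_condition (Xs :\ x0) (Ys :\ y1).
Proof.
move=> slack x0Xs T sTD; have [->|T0] := eqVneq T set0; first by rewrite cards0.
have sTXs : T \subset Xs := subset_trans sTD (subsetDl _ _).
have TXs : T != Xs.
  by apply: contraTneq x0Xs => <-; apply/negP => /(subsetP sTD); rewrite !inE eqxx.
have sN : neighbours T :&: Ys \subset (neighbours T :&: (Ys :\ y1)) :|: [set y1].
  apply/subsetP=> y; rewrite !(in_setI, in_setU, in_setD1, in_set1).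
  by case: (y == y1); case: (y \in neighbours T); case: (y \in Ys).
have := leq_trans (subset_leq_card sN) (leq_card_setU _ _).1.
have := slack T sTXs T0 TXs.
rewrite cards1; lia.
Qed.

(* Either some nonempty proper subset S of Xs is tight, and S and its complement
   are matched separately, or every such set has a surplus and x0 may take any
   of its neighbours. *)
Lemma hall_in (Xs : {set X}) (Ys : {set Y}) : hall_condition Xs Ys -> matchable Xs Ys.
Proof.
have [n] := ubnP #|Xs|; elim: n Xs Ys => // n IH Xs Ys ltXn hallXY.
have [->|[x0 x0Xs]] := set_0Vmem Xs; first exact: matchable0.
case: (boolP [exists S : {set X}, [&& S \subset Xs, S != set0, S != Xs &
                                   #|neighbours S :&: Ys| <= #|S|]]).
  case/existsP=> S /and4P[sSXs S0 SXs tightS].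
  have [hallS hallD] := hall_condition_tight hallXY sSXs tightS.
  have ltSXs : #|S| < #|Xs| by rewrite proper_card // properEneq SXs.
  have ltDXs : #|Xs :\: S| < #|Xs|.
    by rewrite cardsD (setIidPr sSXs); move: ltSXs S0; rewrite -card_gt0; lia.
  by apply: (matchable_split (X1 := S) (Y1 := neighbours S)); apply: IH => //; lia.
move/existsPn=> noTight.
have slack (S : {set X}) : S \subset Xs -> S != set0 -> S != Xs ->
    #|S| < #|neighbours S :&: Ys|.
  by move=> sSXs S0 SXs; have := noTight S; rewrite sSXs S0 SXs ltnNge.
have /card_gt0P[y1 y1N] : 0 < #|neighbours [set x0] :&: Ys|.
  by apply: leq_trans (hallXY _ _); rewrite ?cards1 ?sub1set.
apply: (matchable_split (X1 := [set x0]) (Y1 := [set y1])).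
  exists (fun=> y1) => [x|x y]; last by rewrite !inE => /eqP-> /eqP->.
  move: y1N; rewrite !inE => /andP[/existsP[x' /andP[]]].
  by rewrite inE => /eqP-> rx0y1 y1Ys /eqP->; rewrite y1Ys eqxx rx0y1.
apply: IH (hall_condition_slack y1 slack x0Xs).
by move: ltXn; rewrite [#|Xs|](cardsD1 x0) x0Xs.
Qed.

Lemma hall : (forall S : {set X}, #|S| <= #|neighbours S|) ->
  exists2 f : X -> Y, forall x, r x (f x) & injective f.
Proof.
move=> hallX; have [|f fP fI] := @hall_in setT setT.
  by move=> S _; rewrite setIT.
exists f => [x | x y]; last exact: fI.
by have /andP[] := fP x (in_setT x).
Qed.
End Hall.

Section Regular.
Variables (T K : finType).

Definition regular (F : T -> K) (d : nat) (E : {set T}) :=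
  forall k, #|[set x in E | F x == k]| = d.

Lemma card_regular F d E (S : {set K}) :
  regular F d E -> #|[set x in E | F x \in S]| = #|S| * d.
Proof.
move=> regE; rewrite -sum_nat_const -sum1_card (partition_big F (mem S)) => [|x]; last first.
  by rewrite inE => /andP[].
apply: eq_bigr => k kS; rewrite -(regE k) -sum1_card; apply: eq_bigl => x.
by rewrite !inE; case: eqP => [->|]; rewrite ?(kS : k \in S) ?andbT ?andbF.
Qed.

Lemma regular1_inj F M : regular F 1 M -> {in M &, injective F}.
Proof.
move=> regM x y xM yM Fxy; have /eqP/cards1P[z Fz] := regM (F x).
have zP w : w \in M -> F w = F x -> w = z.
  by move=> wM Fw; apply/set1P; rewrite -Fz inE wM Fw eqxx.
by rewrite (zP x xM) // (zP y yM).
Qed.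

Lemma regularD F d (E M : {set T}) : M \subset E -> regular F d.+1 E -> regular F 1 M ->
  regular F d (E :\: M).
Proof.
move=> sME regE regM k.
rewrite (_ : [set x in E :\: M | F x == k] =
             [set x in E | F x == k] :\: [set x in M | F x == k]).
  rewrite cardsD (setIidPr _) ?regE ?regM ?subn1 //.
  by apply/subsetP=> x; rewrite !inE => /andP[xM ->]; rewrite (subsetP sME).
by apply/setP=> x; rewrite !inE; case: (x \in M); case: (x \in E); case: (F x == k).
Qed.

Lemma regular1_imset F (g : K -> T) : injective (F \o g) -> regular F 1 (g @: setT).
Proof.
move=> Fg_inj k; have g_inj : injective g := inj_compr Fg_inj.
rewrite (_ : [set x in g @: setT | F x == k] = g @: ((F \o g) @^-1: [set k])).
  by rewrite card_imset // card_preimset // cards1.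
apply/setP=> x; rewrite !inE; apply/andP/imsetP => [[/imsetP[k' _ ->] Fk]|[k' + ->]].
  by exists k'; rewrite // !inE.
by rewrite !inE => Fk; rewrite imset_f.
Qed.

Lemma regular_comp_perm F d (s : {perm T}) : regular F d setT -> regular (F \o s) d setT.
Proof.
move=> regT k; rewrite -(regT k) -[RHS](card_preimset _ (@perm_inj _ s)).
by apply: eq_card => x; rewrite !inE.
Qed.

(* The edges E of a bipartite multigraph on K + K, with endpoint maps L and R. *)
Variables (L R : T -> K).

Lemma regular_matching d E : 0 < d -> regular L d E -> regular R d E ->
  exists2 M : {set T}, M \subset E & regular L 1 M /\ regular R 1 M.
Proof.
move=> d_gt0 regL regR.
have [k0 _|K0] := pickP (@predT K); last first.
  by exists set0; [exact: sub0set | split=> k; have := K0 k].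
pose adj k k' := [exists x in E, (L x == k) && (R x == k')].
have [f adjf f_inj] : exists2 f : K -> K, forall k, adj k (f k) & injective f.
  apply: hall k0 _ => S; rewrite -(leq_pmul2r d_gt0) -(card_regular _ regL).
  rewrite -(card_regular _ regR); apply: subset_leq_card; apply/subsetP=> x.
  rewrite !inE => /andP[xE LxS]; rewrite xE; apply/existsP; exists (L x).
  by rewrite LxS; apply/existsP; exists x; rewrite xE !eqxx.
pose g k := xchoose (existsP (adjf k)).
have gP k : [/\ g k \in E, L (g k) = k & R (g k) = f k].
  by have /andP[-> /andP[/eqP-> /eqP->]] := xchooseP (existsP (adjf k)).
exists (g @: setT); first by apply/subsetP=> x /imsetP[k _ ->]; have [] := gP k.
split; apply: regular1_imset => k k' /=.
  by have [_ -> _] := gP k; have [_ -> _] := gP k'.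
by have [_ _ ->] := gP k; have [_ _ ->] := gP k'; apply: f_inj.
Qed.

Lemma regular_coloring d E : regular L d E -> regular R d E ->
  exists c : T -> nat, [/\ {in E, forall x, c x < d},
    {in E &, forall x y, L x = L y -> c x = c y -> x = y} &
    {in E &, forall x y, R x = R y -> c x = c y -> x = y}].
Proof.
elim: d E => [|d IH] E regL regR.
  have E0 x : x \in E = false.
    apply/negP=> xE; have := regL (L x).
    by apply/eqP; rewrite -lt0n card_gt0; apply/set0Pn; exists x; rewrite inE xE eqxx.
  by exists (fun=> 0); split=> x; rewrite E0.
have [M sME [regML regMR]] := regular_matching (ltn0Sn d) regL regR.
have [c [c_lt cL cR]] := IH _ (regularD sME regL regML) (regularD sME regR regMR).
have c_ltE x : x \in E -> x \notin M -> c x < d by move=> xE xM; rewrite c_lt // inE xM.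
pose c' x := if x \in M then d else c x.
have c'_inj F : regular F 1 M ->
    {in E :\: M &, forall x y, F x = F y -> c x = c y -> x = y} ->
    {in E &, forall x y, F x = F y -> c' x = c' y -> x = y}.
  move=> regFM cF x y xE yE Fxy; rewrite /c'; case: ifP => xM; case: ifP => yM.
  - by move=> _; apply: (regular1_inj regFM).
  - by move=> dc; have := c_ltE y yE; rewrite yM -dc ltnn => /(_ isT).
  - by move=> cd; have := c_ltE x xE; rewrite xM cd ltnn => /(_ isT).
  - by apply: cF; rewrite // inE ?xM ?yM.
exists c'; split; [|exact: c'_inj regML cL|exact: c'_inj regMR cR].
by move=> x xE; rewrite /c'; case: ifP => xM; rewrite ltnS ?leqnn // ltnW ?c_ltE ?xM.
Qed.
End Regular.

Section Clos.
Variables (T A B Z : finType) (a : T -> A) (b : T -> B) (z : T -> Z).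
Variable mk : A -> B -> Z -> T.
Hypotheses (mkK : forall x, mk (a x) (b x) (z x) = x)
  (mk_a : forall p q w, a (mk p q w) = p) (mk_b : forall p q w, b (mk p q w) = q)
  (mk_z : forall p q w, z (mk p q w) = w).

Lemma regular_coords : regular (fun x => (b x, z x)) #|A| setT.
Proof.
case=> q w; rewrite -[RHS](card_imset _ (can_inj (fun p => mk_a p q w))).
apply: eq_card => x; rewrite !inE; apply/eqP/imsetP => [[<- <-]|[p _ ->]].
  by exists (a x); rewrite ?mkK.
by rewrite mk_b mk_z.
Qed.

Lemma mk_inj (col : T -> A) (q : T -> B) (w : T -> Z) :
  (forall x y, (q x, w x) = (q y, w y) -> col x = col y -> x = y) ->
  injective (fun x => mk (col x) (q x) (w x)).
Proof.
move=> colI x y mkxy; have := congr1 a mkxy; have := congr1 b mkxy; have := congr1 z mkxy.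
by rewrite !mk_a !mk_b !mk_z => wxy qxy; apply: colI; rewrite qxy wxy.
Qed.

(* The edges x : T, from the (b, z)-line of x to that of pi x, form an
   #|A|-regular multigraph; the colour of x in a proper #|A|-edge-colouring is
   the A-coordinate that x takes in the middle stage. *)
Lemma clos_factorization (pi : {perm T}) : (forall x, z (pi x) = z x) ->
  exists t1 rho t2 : {perm T}, [/\ pi = (t1 * rho * t2)%g,
    forall x, (b (t1 x), z (t1 x)) = (b x, z x),
    forall x, (a (rho x), z (rho x)) = (a x, z x) &
    forall x, (b (t2 x), z (t2 x)) = (b x, z x)].
Proof.
move=> piz.
have [c [c_lt cL cR]] :=
  regular_coloring regular_coords (regular_comp_perm pi regular_coords).
pose col x : A := enum_val (Ordinal (c_lt x (in_setT x))).
have colI (F : T -> B * Z) : {in setT &, forall x y, F x = F y -> c x = c y -> x = y} ->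
    forall x y, F x = F y -> col x = col y -> x = y.
  by move=> cF x y Fxy /enum_val_inj [cxy]; apply: cF.
pose t1 := perm (mk_inj (colI _ cL)).
pose h := perm (mk_inj (q := b \o pi) (w := z \o pi) (colI _ cR)).
exists t1, (t1^-1 * h)%g, (h^-1 * pi)%g; split.
- by apply/permP=> x; rewrite !permM !permK.
- by move=> x; rewrite permE /= mk_b mk_z.
- move=> x; rewrite -(permKV t1 x); move: {x}(t1^-1 x)%g => x.
  by rewrite permM permK !permE /= !mk_a !mk_z piz.
- move=> x; rewrite -(permKV h x); move: {x}(h^-1 x)%g => x.
  by rewrite permM permK !permE /= !mk_b !mk_z.
Qed.
End Clos.

Section Shuffles.
Variables m1 m2 m3 : nat.
Local Notation cell := (cell m1 m2 m3).

Lemma apply_shufflesE (A : {perm cell}) ss :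
  apply_shuffles A ss = (A * \prod_(s <- ss) s)%g.
Proof.
elim: ss A => [|s ss IH] A; first by rewrite big_nil mulg1.
by rewrite big_cons mulgA; apply: IH.
Qed.

Definition prod_of_shuffles n (g : {perm cell}) := exists ss : seq {perm cell},
  [/\ forall s, s \in ss -> is_shuffle s, size ss <= n & (\prod_(s <- ss) s)%g = g].

Lemma prod_of_shufflesM n1 n2 g1 g2 :
  prod_of_shuffles n1 g1 -> prod_of_shuffles n2 g2 -> prod_of_shuffles (n1 + n2) (g1 * g2).
Proof.
move=> [ss1 [ss1P size1 <-]] [ss2 [ss2P size2 <-]]; exists (ss1 ++ ss2); split.
- by move=> s; rewrite mem_cat => /orP[/ss1P|/ss2P].
- by rewrite size_cat leq_add.
- by rewrite big_cat.
Qed.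

Section LineKey.
Variables (K : finType) (k : cell -> K) (d : 'I_3).
Hypothesis k_line : forall x y, k x = k y -> on_line d x y.
Variable t : {perm cell}.
Hypothesis tk : forall x, k (t x) = k x.

Lemma line_part_inj k0 : injective (fun x => if k x == k0 then t x else x).
Proof.
move=> x y /=; case: eqP => kx; case: eqP => ky.
- exact: perm_inj.
- by move=> txy; case: ky; rewrite -txy tk.
- by move=> txy; case: kx; rewrite txy tk.
- by [].
Qed.

Definition line_part k0 := perm (@line_part_inj k0).

Lemma line_part_shuffle c : is_shuffle (line_part (k c)).
Proof.
exists d, c => x; apply: contraNeq; rewrite permE /=.
by case: (k x =P k c) => [kxc _|_ /=]; [exact: k_line (esym kxc) | rewrite eqxx].
Qed.

Lemma prod_line_parts (s : seq K) x : uniq s ->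
  (\prod_(k0 <- s) line_part k0)%g x = if k x \in s then t x else x.
Proof.
elim: s x => [|k0 s IH] x; first by rewrite big_nil perm1.
rewrite big_cons permM cons_uniq => /andP[k0s /IH{}IH]; rewrite IH inE !permE /=.
case: eqP => [kx|_] /=; last by [].
by rewrite tk kx (negPf k0s).
Qed.

Lemma prod_of_shuffles_line : prod_of_shuffles #|K| t.
Proof.
exists [seq line_part k0 | k0 <- enum (k @: setT)]; split.
- move=> _ /mapP[_ /[!mem_enum] /imsetP[c _ ->] ->]; exact: line_part_shuffle.
- by rewrite size_map -cardE max_card.
- apply/permP=> x; rewrite big_map prod_line_parts ?enum_uniq //.
  by rewrite mem_enum imset_f.
Qed.
End LineKey.

Lemma prod_of_shuffles_axis0 (t : {perm cell}) :
  (forall x, ((t x).1.2, (t x).2) = (x.1.2, x.2)) -> prod_of_shuffles (m2 * m3) t.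
Proof.
move=> tP.
have := prod_of_shuffles_line (k := fun x : cell => (x.1.2, x.2)) (d := ord0) _ tP.
by rewrite card_prod !card_ord; apply=> x y [e1 e2]; rewrite /on_line /= e1 e2 !eqxx.
Qed.

Lemma prod_of_shuffles_axis1 (t : {perm cell}) :
  (forall x, ((t x).1.1, (t x).2) = (x.1.1, x.2)) -> prod_of_shuffles (m1 * m3) t.
Proof.
move=> tP; have := prod_of_shuffles_line (k := fun x : cell => (x.1.1, x.2))
  (d := Ordinal (isT : 1 < 3)) _ tP.
by rewrite card_prod !card_ord; apply=> x y [e1 e2]; rewrite /on_line /= e1 e2 !eqxx.
Qed.

Lemma prod_of_shuffles_axis2 (t : {perm cell}) :
  (forall x, (t x).1 = x.1) -> prod_of_shuffles (m1 * m2) t.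
Proof.
move=> tP.
have := prod_of_shuffles_line (k := fun x : cell => x.1) (d := ord_max) _ tP.
by rewrite card_prod !card_ord; apply=> x y e; rewrite /on_line /= e !eqxx.
Qed.

Lemma perm_factor_axis2 (pi : {perm cell}) : exists t1 rho t2 : {perm cell},
  [/\ pi = (t1 * rho * t2)%g, forall x, (t1 x).1 = x.1, forall x, (rho x).2 = x.2
    & forall x, (t2 x).1 = x.1].
Proof.
have [t1 [rho [t2 [-> t1P rhoP t2P]]]] :=
  @clos_factorization cell ('I_m3) ('I_m1 * 'I_m2)%type unit (fun x => x.2) (fun x => x.1)
    (fun=> tt) (fun p q _ => (q, p)) (fun '(_, _) => erefl) (fun _ _ _ => erefl)
    (fun _ _ _ => erefl) (fun _ _ 'tt => erefl) pi (fun=> erefl).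
by exists t1, rho, t2; split=> // x; [case: (t1P x) | case: (rhoP x) | case: (t2P x)].
Qed.

Lemma perm_factor_axes01 (rho : {perm cell}) : (forall x, (rho x).2 = x.2) ->
  exists u1 rho' u2 : {perm cell}, [/\ rho = (u1 * rho' * u2)%g,
    forall x, ((u1 x).1.2, (u1 x).2) = (x.1.2, x.2),
    forall x, ((rho' x).1.1, (rho' x).2) = (x.1.1, x.2) &
    forall x, ((u2 x).1.2, (u2 x).2) = (x.1.2, x.2)].
Proof.
exact: (@clos_factorization cell ('I_m1) ('I_m2) ('I_m3) (fun x => x.1.1)
  (fun x => x.1.2) (fun x => x.2) (fun p q w => (p, q, w)) (fun '(_, _, _) => erefl)
  (fun _ _ _ => erefl) (fun _ _ _ => erefl) (fun _ _ _ => erefl)).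
Qed.
End Shuffles.

Unset Implicit Arguments.

Theorem mainTheorem10 (m1 m2 m3 : nat) (h12 : m2 <= m1) (h23 : m3 <= m2)
  (S G : {perm cell m1 m2 m3}) :
  exists ss : seq {perm cell m1 m2 m3},
    [/\ (forall s, s \in ss -> is_shuffle s),
        size ss <= m1 * m2 + m3 * (2 * m2 + m1) + m1 * m2
      & apply_shuffles S ss = G].
Proof.
suff [ss [ssP size_ss prod_ss]] :
    prod_of_shuffles (m1 * m2 + (m2 * m3 + m1 * m3 + m2 * m3) + m1 * m2) (S^-1 * G)%g.
  exists ss; split=> //; last by rewrite apply_shufflesE prod_ss mulgA mulgV mul1g.
  by apply: leq_trans size_ss _; nia.
have [t1 [rho [t2 [-> t1P rhoP t2P]]]] := perm_factor_axis2 (S^-1 * G)%g.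
have [u1 [rho' [u2 [-> u1P rho'P u2P]]]] := perm_factor_axes01 rhoP.
apply: prod_of_shufflesM (prod_of_shuffles_axis2 t2P).
apply: prod_of_shufflesM (prod_of_shuffles_axis2 t1P) _.
apply: prod_of_shufflesM (prod_of_shuffles_axis0 u2P).
exact: prod_of_shufflesM (prod_of_shuffles_axis0 u1P) (prod_of_shuffles_axis1 rho'P).
Qed.
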